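(* Let $X$ be a compact topological space equipped with a continuous action of a sofic monoid $M$, let $\Sigma=(D_i,\sigma_i)_{i\in I}$ be a sofic approximation of $M$ with $\lim_{i\in I}|D_i|=\infty$, and let $\rho$ be a continuous pseudometric on $X$. Then $$h_\Sigma(X,M,\rho)=\sup_{\varepsilon>0}\inf_F\inf_{\delta>0}\limsup_{i\in I}\frac{1}{|D_i|}\log N_\varepsilon(\operatorname{Map}(X,M,\rho,F,\delta,\sigma_i),\rho_2^{D_i}),$$ where $\inf_F$ is over all finite subsets $F\subset M$.
   Context: Hamming metric on $\operatorname{Map}(D)$ (maps $D\to D$, $D$ finite non-empty): $d_D^{\mathrm{Ham}}(f,g)=\frac{1}{|D|}|\{v:f(v)\ne g(v)\}|$. A sofic approximation of a monoid $M$ is a net $(D_i,\sigma_i)_{i\in I}$ over a directed set, $D_i$ non-empty finite, $\sigma_i\colon M\to\operatorname{Map}(D_i)$, with $\sigma_i(1_M)=\mathrm{Id}_{D_i}$, $\lim_i d^{\mathrm{Ham}}_{D_i}(\sigma_i(m_1m_2),\sigma_i(m_1)\sigma_i(m_2))=0$ for all $m_1,m_2$, and $\lim_i d^{\mathrm{Ham}}_{D_i}(\sigma_i(m_1),\sigma_i(m_2))=1$ for all distinct $m_1,m_2$; $M$ is sofic iff it admits one. For non-empty finite $D$, on $X^D$ set $\rho_2^D(\varphi,\psi)=(\frac{1}{|D|}\sum_{v\in D}\rho(\varphi(v),\psi(v))^2)^{1/2}$, $\rho_\infty^D(\varphi,\psi)=\max_{v}\rho(\varphi(v),\psi(v))$,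 and $(m\varphi)(v)=m\varphi(v)$. For finite $F\subset M$, $\delta>0$, $\sigma\colon M\to\operatorname{Map}(D)$: $\operatorname{Map}(X,M,\rho,F,\delta,\sigma)=\{\varphi\in X^D:\rho_2^D(\varphi\circ\sigma(m),m\varphi)\le\delta\ \forall m\in F\}$. $N_\varepsilon(Z,d)$ is the maximal cardinality of a subset of $Z$ with pairwise $d$-distances $\ge\varepsilon$. The sofic topological entropy is $h_\Sigma(X,M,\rho)=\sup_{\varepsilon>0}\inf_F\inf_{\delta>0}\limsup_i\frac{1}{|D_i|}\log N_\varepsilon(\operatorname{Map}(X,M,\rho,F,\delta,\sigma_i),\rho_\infty^{D_i})$ ($\log 0=-\infty$). *)

From HB Require Import structures.
From mathcomp Require Import all_boot all_order all_algebra.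
From mathcomp Require Import all_classical all_reals all_analysis.
Set Implicit Arguments. Unset Strict Implicit. Unset Printing Implicit Defensive.
Import Order.TTheory GRing.Theory Num.Theory numFieldNormedType.Exports.
Local Open Scope classical_set_scope.
Local Open Scope ring_scope.

Definition is_monoid (M : Type) (mul : M -> M -> M) (one : M) : Prop :=
  [/\ (forall a b c, mul a (mul b c) = mul (mul a b) c),
      (forall a, mul one a = a) & (forall a, mul a one = a)].

Definition is_cont_action (M : Type) (mul : M -> M -> M) (one : M)
  (X : topologicalType) (act : M -> X -> X) : Prop :=
  [/\ act one = id,
      (forall m1 m2, act (mul m1 m2) = act m1 \o act m2)
    & (forall m, continuous (act m))].

Definition is_cont_pseudometric (R : realType) (X : topologicalType)
  (rho : X -> X -> R) : Prop :=
  [/\ (forall x y, 0 <= rho x y), (forall x, rho x x = 0),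
      (forall x y, rho x y = rho y x),
      (forall x y z, rho x z <= rho x y + rho y z)
    & continuous (fun p : X * X => rho p.1 p.2)].

Definition is_directed (I : Type) (le : I -> I -> Prop) : Prop :=
  [/\ inhabited I, (forall i, le i i),
      (forall i j k, le i j -> le j k -> le i k)
    & (forall i j, exists k, le i k /\ le j k)].

Definition net_lim (R : realType) (I : Type) (le : I -> I -> Prop)
  (a : I -> R) (L : R) : Prop :=
  forall e : R, 0 < e -> exists i0, forall i, le i0 i -> `|a i - L| < e.

Definition net_card_to_infty (I : Type) (le : I -> I -> Prop) (D : I -> finType) : Prop :=
  forall N : nat, exists i0, forall i, le i0 i -> (N < #|D i|)%N.

Definition net_limsup (R : realType) (I : Type) (le : I -> I -> Prop)
  (a : I -> \bar R) : \bar R :=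
  ereal_inf [set ereal_sup [set a j | j in [set j | le i j]] | i in [set: I]].

Definition ham_dist (R : realType) (D : finType) (f g : D -> D) : R :=
  (#|[set v | f v != g v]|%:R) / (#|D|%:R).

Definition is_sofic_approx (R : realType) (M : Type) (mul : M -> M -> M) (one : M)
  (I : Type) (le : I -> I -> Prop) (D : I -> finType)
  (sigma : forall i, M -> D i -> D i) : Prop :=
  [/\ is_directed le,
      (forall i, (0 < #|D i|)%N),
      (forall i, sigma i one = id),
      (forall m1 m2, net_lim le
          (fun i => ham_dist R (sigma i (mul m1 m2)) (sigma i m1 \o sigma i m2)) 0)
    & (forall m1 m2, m1 <> m2 ->
          net_lim le (fun i => ham_dist R (sigma i m1) (sigma i m2)) 1)].

Definition rho2 (R : realType) (X : Type) (rho : X -> X -> R) (D : finType)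
  (phi psi : D -> X) : R :=
  Num.sqrt ((#|D|%:R)^-1 * \sum_(v : D) rho (phi v) (psi v) ^+ 2).

Definition rhoinf (R : realType) (X : Type) (rho : X -> X -> R) (D : finType)
  (phi psi : D -> X) : R :=
  \big[Num.max/0]_(v : D) rho (phi v) (psi v).

Definition MapSet (R : realType) (M X : Type) (act : M -> X -> X) (rho : X -> X -> R)
  (F : set M) (delta : R) (D : finType) (sigma : M -> D -> D) : set (D -> X) :=
  [set phi : D -> X | forall m, F m ->
     rho2 rho (fun v => phi (sigma m v)) (fun v => act m (phi v)) <= delta].

(** N_eps(Z, d): maximal cardinality of an eps-separated subset of Z
    (a subset with n elements is given by an injective enumeration 'I_n -> T;
    +oo if arbitrarily large finite separated subsets exist). *)
Definition sep_number (R : realType) (T : Type) (Z : set T) (d : T -> T -> R)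
  (eps : R) : \bar R :=
  ereal_sup [set (n%:R)%:E | n in
    [set n : nat | exists phi : 'I_n -> T,
       (forall j, Z (phi j)) /\ (forall j k, j != k -> eps <= d (phi j) (phi k))]].

Definition elog (R : realType) (x : \bar R) : \bar R :=
  match x with
  | EFin r => if r <= 0 then -oo%E else (ln r)%:E
  | EPInf => +oo%E
  | ENInf => -oo%E
  end.

Definition sofic_entropy_with (R : realType) (M X : Type) (act : M -> X -> X)
  (rho : X -> X -> R) (I : Type) (le : I -> I -> Prop) (D : I -> finType)
  (sigma : forall i, M -> D i -> D i)
  (d : forall D : finType, (D -> X) -> (D -> X) -> R) : \bar R :=
  ereal_sup [set
    ereal_inf [set
      ereal_inf [set
        net_limsup le (fun i =>
          ((#|D i|%:R)^-1)%:E *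
          elog (sep_number (MapSet act rho F delta (sigma i)) (@d (D i)) eps))%E
      | delta in [set delta : R | 0 < delta]]
    | F in [set F : set M | finite_set F]]
  | eps in [set eps : R | 0 < eps]].

Definition sofic_top_entropy (R : realType) (M X : Type) (act : M -> X -> X)
  (rho : X -> X -> R) (I : Type) (le : I -> I -> Prop) (D : I -> finType)
  (sigma : forall i, M -> D i -> D i) : \bar R :=
  sofic_entropy_with act rho le sigma (fun D' => @rhoinf R X rho D').

(* Every rho_2-separated family is rho_infty-separated, since rho_2 <= rho_infty; this
   gives one inequality.  Conversely fix eta > 0.  Compactness cuts X into K cells of
   rho-diameter < eps.  In a rho_infty-eps-separated family, a maximal rho_2-eps'-separated
   subfamily S (eps' = sqrt kap * eps / 2) is a net: each member is rho_2-close to a center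
   in S, hence, by Chebyshev, eps/2-close to it outside fewer than kap |D| coordinates,
   and it is determined by its center and the cells of its values there.  Counting these
   codes gives N_eps(rho_infty) <= N_eps'(rho_2) exp (eta |D|) once kap is small, for
   every D. *)

From HB Require Import structures.
From mathcomp Require Import all_boot all_order all_algebra.
From mathcomp Require Import all_classical all_reals all_analysis.
From mathcomp Require Import ring.
Set Implicit Arguments. Unset Strict Implicit. Unset Printing Implicit Defensive.
Import Order.TTheory GRing.Theory Num.Theory numFieldNormedType.Exports.
Local Open Scope classical_set_scope.
Local Open Scope ring_scope.

Section ExtendedReals.
Variable R : realType.
Local Open Scope ereal_scope.

Lemma ereal_sup_image_leDr (T : Type) (A : set T) (f g : T -> \bar R) (c : R) :
  (forall x, A x -> f x <= g x + c%:E) ->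
  ereal_sup (f @` A) <= ereal_sup (g @` A) + c%:E.
Proof.
move=> fg; apply: ge_ereal_sup => _ [x Ax <-].
by apply: le_trans (fg x Ax) _; apply: leeD2r; apply: ereal_sup_ubound; exists x.
Qed.

Lemma ereal_inf_image_leDr (T : Type) (A : set T) (f g : T -> \bar R) (c : R) :
  (forall x, A x -> f x <= g x + c%:E) ->
  ereal_inf (f @` A) <= ereal_inf (g @` A) + c%:E.
Proof.
move=> fg; rewrite -leeBlDr //; apply: le_ereal_inf_tmp => _ [x Ax <-].
by rewrite leeBlDr //; apply: le_trans (fg x Ax); apply: ereal_inf_lbound; exists x.
Qed.

Lemma net_limsup_leDr (I : Type) (le : I -> I -> Prop) (a b : I -> \bar R) (c : R) :
  (forall i, a i <= b i + c%:E) -> net_limsup le a <= net_limsup le b + c%:E.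
Proof. by move=> ab; apply: ereal_inf_image_leDr => i _; exact: ereal_sup_image_leDr. Qed.

Lemma elog_le (x y : \bar R) : x <= y -> elog x <= elog y.
Proof.
case: x => [r| |] //=; [|by rewrite leye_eq => /eqP ->|by move=> _; rewrite leNye].
case: ifPn => [_ _|]; first by rewrite leNye.
rewrite -ltNge => r0; case: y => [s| |] //=; last by move=> _; exact: leey.
rewrite lee_fin => rs; have s0 : (0 < s)%R by exact: lt_le_trans rs.
by rewrite ifN -?ltNge // lee_fin ler_ln // posrE.
Qed.

Lemma elogMr (x : \bar R) (c : R) : 0 <= x -> (0 < c)%R ->
  elog (x * c%:E) = elog x + (ln c)%:E.
Proof.
case: x => [r| |] // r0 c0; last by rewrite gt0_mulye.
rewrite -EFinM /= pmulr_lle0 //; case: ifPn => // r_gt0.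
by rewrite lnM // posrE ltNge.
Qed.

Lemma scaled_elog_le (n c : R) (x y : \bar R) : (0 < n)%R -> 0 <= y -> (0 < c)%R ->
  x <= y * c%:E -> (n^-1)%:E * elog x <= (n^-1)%:E * elog y + (n^-1 * ln c)%:E.
Proof.
move=> n0 y0 c0 xyc; rewrite EFinM -muleDr // -?elogMr //.
  by apply: lee_wpmul2l; [rewrite lee_fin invr_ge0 ltW | exact: elog_le].
by case: (elog y).
Qed.
End ExtendedReals.

Section CompactPseudometric.
Variables (R : realType) (X : topologicalType) (rho : X -> X -> R).
Hypothesis rho_refl : forall x, rho x x = 0.
Hypothesis rho_sym : forall x y, rho x y = rho y x.
Hypothesis rho_tri : forall x y z, rho x z <= rho x y + rho y z.
Hypothesis rho_cont : forall c, continuous (rho c).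

Lemma compact_finite_cover_balls (r : R) : compact [set: X] -> 0 < r ->
  exists s : seq X, forall y, exists2 c, c \in s & rho c y < r.
Proof.
move=> cpt r0; have [[x0 _]|X0] := pselect (exists x : X, True); last first.
  by exists [::] => y; exfalso; apply: X0; exists y.
(* [compact_cover] is only stated for pointed spaces. *)
pose Xp := HB.pack_for ptopologicalType X (isPointed.Build X x0).
have /(_ X setT (fun c => rho c @^-1` `]-oo, r[)) [] : @cover_compact Xp [set: X].
  by rewrite -compact_cover.
- by move=> c _; apply: open_comp; [move=> y _; exact: rho_cont|exact: interval_open].
- by move=> y _; exists y => //=; rewrite rho_refl in_itv.
move=> s _ cov; exists (finmap.enum_fset s) => y.
by have [c /= cs] := cov y I; rewrite in_itv /=; exists c.
Qed.

Lemma compact_finite_partition (r : R) : compact [set: X] -> 0 < r ->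
  exists K (idx : X -> 'I_K), forall y z, idx y = idx z -> rho y z < r.
Proof.
move=> cpt r0; have [s cov] := compact_finite_cover_balls cpt (divr_gt0 r0 (ltr0n _ 2)).
pose t := in_tuple s.
have center y : {i : 'I_(size s) | rho (tnth t i) y < r / 2}.
  apply: cid; have [c cs hc] := cov y.
  by exists (Ordinal (etrans (index_mem c s) cs)); rewrite (tnth_nth c) nth_index.
exists (size s), (fun y => sval (center y)) => y z idx_yz.
have := svalP (center z); have := svalP (center y); rewrite -idx_yz => hy hz.
apply: le_lt_trans (rho_tri _ (tnth t (sval (center y))) _) _.
by rewrite rho_sym [r in _ < r]splitr ltrD.
Qed.
End CompactPseudometric.

Definition small_support (R : realType) (D : finType) (K : nat) (kap : R) :
    pred {ffun D -> 'I_K.+1} :=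
  [pred g : {ffun D -> 'I_K.+1} | #|[pred v | g v != ord0]|%:R < kap * #|D|%:R].
Arguments small_support {R} D K kap.

Section SmallSupport.
Variable R : realType.

(* Chernoff: weight each function by [exp (- t)] per non-zero value; the total weight
   factors over [D]. *)
Lemma card_small_support_le (D : finType) (K : nat) (t kap : R) : 0 < t ->
  #|small_support D K kap|%:R
    <= expR (t * kap * #|D|%:R) * (1 + K%:R * expR (- t)) ^+ #|D|.
Proof.
move=> t0; set x := expR (- t).
pose w (j : 'I_K.+1) : R := if j != ord0 then x else 1.
have w_ge0 j : 0 <= w j by rewrite /w; case: ifP => _; [exact: expR_ge0|exact: ler01].
have weight_g g : \prod_v w (g v) = x ^+ #|[pred v | g v != ord0]|.
  by rewrite /w -big_mkcond /= -prodr_const; apply: eq_bigl => v; rewrite inE.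
have total_weight : \sum_(g : {ffun D -> 'I_K.+1}) \prod_v w (g v) = (1 + K%:R * x) ^+ #|D|.
  rewrite -(bigA_distr_bigA (fun _ j => w j)) /= prodr_const big_ord_recl /w eqxx /=.
  by rewrite sumr_const card_ord mulr_natl.
have small_weight : #|small_support D K kap|%:R * expR (- (t * kap * #|D|%:R))
    <= \sum_(g in small_support D K kap) \prod_v w (g v).
  rewrite mulr_natl -sumr_const; apply: ler_sum => g; rewrite inE => small_g.
  rewrite weight_g /x -expRM_natr ler_expR mulNr lerN2 -mulrA ler_pM2l //.
  exact: ltW.
have sub_weight : \sum_(g in small_support D K kap) \prod_v w (g v)
    <= \sum_(g : {ffun D -> 'I_K.+1}) \prod_v w (g v).
  rewrite [leRHS](bigID (mem (small_support D K kap))) /= lerDl.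
  by apply: sumr_ge0 => g _; exact: prodr_ge0.
have := le_trans small_weight sub_weight.
by rewrite total_weight expRN ler_pdivrMr ?expR_gt0 // mulrC.
Qed.

Lemma small_support_subexponential (K : nat) (eta : R) : 0 < eta ->
  exists2 kap : R, 0 < kap &
    forall D : finType, #|small_support D K kap|%:R <= expR (eta * #|D|%:R).
Proof.
(* [t] makes [K exp (- t) <= eta / 2] and [kap] makes [t kap = eta / 2]. *)
move=> eta0; pose t := 2 * K%:R / eta + 1; pose kap := eta / (2 * t).
have t0 : 0 < t by apply: ltr_pwDr; [exact: ltr01|rewrite divr_ge0 ?mulr_ge0 ?ler0n ?ltW].
exists kap => [|D]; first by rewrite divr_gt0 ?mulr_gt0.
apply: le_trans (card_small_support_le D K kap t0) _.
have expR_bound : 1 + K%:R * expR (- t) <= expR (eta / 2).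
  apply: le_trans (expR_ge1Dx _); rewrite lerD2l expRN ler_pdivrMr ?expR_gt0 //.
  apply: le_trans (_ : eta / 2 * (1 + t) <= _); last first.
    by rewrite ler_wpM2l ?expR_ge1Dx // divr_ge0 ?ltW.
  have -> : eta / 2 * (1 + t) = K%:R + eta by rewrite /t; field; rewrite gt_eqF.
  by rewrite lerDl ltW.
apply: le_trans (_ : expR (t * kap * #|D|%:R) * expR (eta / 2) ^+ #|D| <= _).
  by rewrite ler_wpM2l ?expR_ge0 // lerXn2r // nnegrE ?expR_ge0 // ltW.
have -> : t * kap = eta / 2 by rewrite /kap; field; rewrite gt_eqF.
by rewrite -expRM_natr -expRD -mulrDl -splitr.
Qed.
End SmallSupport.

Lemma maximal_separated_subset (R : realType) (J : finType) (d : J -> J -> R) (r : R) :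
  (forall j, d j j < r) -> (forall j k, d j k = d k j) ->
  exists S : {set J},
    (forall j k, j \in S -> k \in S -> j != k -> r <= d j k) /\
    (forall j, exists2 k, k \in S & d j k < r).
Proof.
move=> dxx dC; pose separated (S : {set J}) :=
  [forall j in S, forall k in S, (j != k) ==> (r <= d j k)].
have [|S sepS maxS] := arg_maxnP (fun S : {set J} => #|S|) (_ : separated finset.set0).
  by apply/forall_inP => j; rewrite inE.
have {}sepS j k : j \in S -> k \in S -> j != k -> r <= d j k.
  by move=> jS kS; move/forall_inP: sepS => /(_ j jS) /forall_inP /(_ k kS) /implyP.
exists S; split=> // j; apply/exists_inP; apply: contraT => /exists_inPn far_j.
have jS : j \notin S by apply/negP => jS; have := far_j j jS; rewrite dxx.
suff /maxS : separated (j |: S) by rewrite cardsU1 jS /= add1n ltnn.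
apply/forall_inP => j1 /setU1P [->|j1S]; apply/forall_inP => k1 /setU1P [->|k1S];
  apply/implyP => ne; first by rewrite eqxx in ne.
- by rewrite leNgt far_j.
- by rewrite dC leNgt far_j.
- exact: sepS.
Qed.

Section Pseudometric.
Variables (R : realType) (X : Type) (rho : X -> X -> R).
Hypothesis rho_ge0 : forall x y, 0 <= rho x y.
Hypothesis rho_refl : forall x, rho x x = 0.
Hypothesis rho_sym : forall x y, rho x y = rho y x.
Hypothesis rho_tri : forall x y z, rho x z <= rho x y + rho y z.

Lemma rho_le_rhoinf (D : finType) (phi psi : D -> X) v :
  rho (phi v) (psi v) <= rhoinf rho phi psi.
Proof. by rewrite /rhoinf (bigD1 v) //= le_max lexx. Qed.

Lemma rhoinf_lt (D : finType) (phi psi : D -> X) e : 0 < e ->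
  (forall v, rho (phi v) (psi v) < e) -> rhoinf rho phi psi < e.
Proof. by move=> e0 lt_e; apply: (big_ind (fun x => x < e)) => // a b; rewrite gt_max => ->. Qed.

Lemma rhoinf_ge0 (D : finType) (phi psi : D -> X) : 0 <= rhoinf rho phi psi.
Proof. by apply: (big_ind (fun x => 0 <= x)) => // a b; rewrite le_max => ->. Qed.

Lemma rho2_le_rhoinf (D : finType) (phi psi : D -> X) : (0 < #|D|)%N ->
  rho2 rho phi psi <= rhoinf rho phi psi.
Proof.
move=> D0; rewrite /rho2 -(ger0_norm (rhoinf_ge0 phi psi)) -sqrtr_sqr.
rewrite ler_sqrt ?exprn_ge0 ?rhoinf_ge0 // ler_pdivrMl ?ltr0n //.
apply: le_trans (_ : \sum_(v : D) rhoinf rho phi psi ^+ 2 <= _).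
  by apply: ler_sum => v _; rewrite lerXn2r ?rho_le_rhoinf ?nnegrE ?rhoinf_ge0.
by rewrite sumr_const mulr_natl.
Qed.

Lemma rho2xx (D : finType) (phi : D -> X) : rho2 rho phi phi = 0.
Proof. by rewrite /rho2 big1 ?mulr0 ?sqrtr0 // => v _; rewrite rho_refl expr0n. Qed.

Lemma rho2C (D : finType) (phi psi : D -> X) : rho2 rho phi psi = rho2 rho psi phi.
Proof. by rewrite /rho2; congr (Num.sqrt (_ * _)); apply: eq_bigr => v _; rewrite rho_sym. Qed.

Lemma card_far_lt_of_rho2 (D : finType) (phi psi : D -> X) (kap r : R) :
  (0 < #|D|)%N -> 0 < kap -> 0 < r -> rho2 rho phi psi < Num.sqrt (kap * r ^+ 2) ->
  #|[pred v | r <= rho (phi v) (psi v)]|%:R < kap * #|D|%:R.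
Proof.
move=> D0 kap0 r0; rewrite /rho2 ltr_sqrt ?mulr_gt0 ?exprn_gt0 //.
rewrite ltr_pdivrMl ?ltr0n // mulrCA mulrA => sum_lt.
rewrite -(ltr_pM2r (exprn_gt0 2 r0)); apply: le_lt_trans sum_lt; rewrite mulr_natl -sumr_const.
apply: le_trans (_ : \sum_(v in [pred v | r <= rho (phi v) (psi v)]) rho (phi v) (psi v) ^+ 2 <= _).
  by apply: ler_sum => v; rewrite inE /= => far_v; rewrite lerXn2r ?nnegrE ?rho_ge0 // ltW.
rewrite [leRHS](bigID [pred v | r <= rho (phi v) (psi v)]) /= lerDl.
by apply: sumr_ge0 => v _; exact: exprn_ge0.
Qed.
End Pseudometric.

Section SeparationNumbers.
Variable R : realType.
Local Open Scope ereal_scope.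

Lemma sep_number_ge0 (T : Type) (Z : set T) (d : T -> T -> R) e : 0 <= sep_number Z d e.
Proof.
apply: ereal_sup_ubound; exists 0%N => //.
have phi0 : 'I_0 -> T by case.
by exists phi0; split=> -[].
Qed.

Lemma sep_number_ge (T : Type) (Z : set T) (d : T -> T -> R) e n (phi : 'I_n -> T) :
  (forall j, Z (phi j)) -> (forall j k, j != k -> (e <= d (phi j) (phi k))%R) ->
  n%:R%:E <= sep_number Z d e.
Proof. by move=> Zphi sep; apply: ereal_sup_ubound; exists n => //; exists phi. Qed.

Lemma le_sep_number (T : Type) (Z : set T) (d1 d2 : T -> T -> R) e :
  (forall x y, Z x -> Z y -> (d1 x y <= d2 x y)%R) -> sep_number Z d1 e <= sep_number Z d2 e.
Proof.
move=> d12; apply: le_ereal_sup => _ [n [phi [Zphi sep]] <-]; exists n => //.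
by exists phi; split=> // j k jk; apply: le_trans (sep j k jk) (d12 _ _ (Zphi j) (Zphi k)).
Qed.
End SeparationNumbers.

Section Coding.
Variables (R : realType) (X : Type) (rho : X -> X -> R).
Hypothesis rho_ge0 : forall x y, 0 <= rho x y.
Hypothesis rho_refl : forall x, rho x x = 0.
Hypothesis rho_sym : forall x y, rho x y = rho y x.
Hypothesis rho_tri : forall x y z, rho x z <= rho x y + rho y z.
Variables (e : R) (K : nat) (idx : X -> 'I_K).
Hypothesis e_gt0 : 0 < e.
Hypothesis idx_small : forall y z, idx y = idx z -> rho y z < e.

(* [j] is encoded by its center [c j] and, at each [v] where [phi j] is far from that
   center, by the cell of [phi j v]; two points sharing a code are [e]-close everywhere. *)
Lemma card_le_centers_codes (D : finType) (N : nat) (phi : 'I_N -> D -> X)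
    (S : {set 'I_N}) (c : 'I_N -> 'I_N) (kap : R) :
  (forall j k, j != k -> e <= rhoinf rho (phi j) (phi k)) ->
  (forall j, c j \in S) ->
  (forall j, #|[pred v | e / 2 <= rho (phi j v) (phi (c j) v)]|%:R < kap * #|D|%:R) ->
  (N <= #|S| * #|small_support D K kap|)%N.
Proof.
move=> sep cS few_far.
pose code j v : 'I_K.+1 :=
  if rho (phi j v) (phi (c j) v) < e / 2 then ord0 else lift ord0 (idx (phi j v)).
pose f j := (c j, [ffun v => code j v]).
have f_inj : injective f.
  move=> j k [c_jk /ffunP code_jk]; apply/eqP/negPn/negP => /sep.
  apply/negP; rewrite -ltNge; apply: rhoinf_lt => // v.
  have := code_jk v; rewrite !ffunE /code -c_jk.
  case: ifP => near_j; case: ifP => near_k.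
  - move=> _; apply: le_lt_trans (rho_tri _ (phi (c j) v) _) _.
    by rewrite (rho_sym (phi (c j) v)) [e]splitr ltrD.
  - by move/eqP; rewrite (negPf (neq_lift _ _)).
  - by move/eqP; rewrite eq_sym (negPf (neq_lift _ _)).
  - by move/lift_inj/idx_small.
have f_sub : (f @: [set: 'I_N] \subset finset.setX S [set g in small_support D K kap])%SET.
  apply/fintype.subsetP => _ /imsetP [j _ ->]; rewrite finset.in_setX cS !inE /=.
  apply: le_lt_trans (few_far j); rewrite ler_nat; apply: subset_leq_card.
  apply/fintype.subsetP => v; rewrite !inE ffunE /code.
  by case: ifP => [|/negbT]; rewrite ?eqxx // -leNgt.
by have := subset_leq_card f_sub; rewrite card_imset // cardsX cardsT card_ord cardsE.
Qed.

Lemma rhoinf_separated_rho2_subfamily (eta : R) : 0 < eta ->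
  exists2 e' : R, 0 < e' & forall (D : finType) (N : nat) (phi : 'I_N -> D -> X),
    (0 < #|D|)%N -> (forall j k, j != k -> e <= rhoinf rho (phi j) (phi k)) ->
    exists S : {set 'I_N},
      (forall j k, j \in S -> k \in S -> j != k -> e' <= rho2 rho (phi j) (phi k)) /\
      N%:R <= #|S|%:R * expR (eta * #|D|%:R).
Proof.
move=> eta0; have [kap kap0 small_le] := small_support_subexponential K eta0.
have e2_gt0 : 0 < e / 2 by rewrite divr_gt0.
pose e' := Num.sqrt (kap * (e / 2) ^+ 2).
have e'_gt0 : 0 < e' by rewrite sqrtr_gt0 mulr_gt0 ?exprn_gt0.
exists e' => // D N phi D0 sep.
have [|S [sepS nearS]] := @maximal_separated_subset _ _
    (fun j k => rho2 rho (phi j) (phi k)) e' _ (fun j k => rho2C rho_sym (phi j) (phi k)).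
  by move=> j; rewrite rho2xx.
have near_center j : exists k, k \in S /\ rho2 rho (phi j) (phi k) < e'.
  by have [k kS near_k] := nearS j; exists k.
have [c cP] := boolp.choice near_center.
have := card_le_centers_codes sep (fun j => (cP j).1)
  (fun j => card_far_lt_of_rho2 rho_ge0 D0 kap0 e2_gt0 (cP j).2).
rewrite -(@ler_nat R) natrM => N_le.
exists S; split=> //; apply: le_trans N_le _.
by apply: ler_wpM2l; [exact: ler0n|exact: small_le].
Qed.

Lemma sep_number_rhoinf_le (eta : R) : 0 < eta ->
  exists2 e' : R, 0 < e' & forall (D : finType) (Z : set (D -> X)), (0 < #|D|)%N ->
    (sep_number Z (@rhoinf R X rho D) e
       <= sep_number Z (@rho2 R X rho D) e' * (expR (eta * #|D|%:R))%:E)%E.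
Proof.
move=> eta0; have [e' e'_gt0 subfamily] := rhoinf_separated_rho2_subfamily eta0.
exists e' => // D Z D0; apply: ge_ereal_sup => _ [N [phi [Zphi sep]] <-].
have [S [sepS N_le]] := subfamily D N phi D0 sep.
apply: le_trans (_ : (#|S|%:R * expR (eta * #|D|%:R))%:E <= _)%E; first by rewrite lee_fin.
rewrite EFinM lee_wpmul2r ?lee_fin ?expR_ge0 //.
apply: sep_number_ge (fun j => phi (enum_val j)) _ _ => [j|j k jk]; first exact: Zphi.
apply: sepS; rewrite ?enum_valP //.
by apply: contra jk => /eqP /enum_val_inj ->.
Qed.
End Coding.

Lemma sofic_entropy_with_leDr (R : realType) (M X : Type) (act : M -> X -> X)
    (rho : X -> X -> R) (I : Type) (le : I -> I -> Prop) (D : I -> finType)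
    (sigma : forall i, M -> D i -> D i)
    (d1 d2 : forall D : finType, (D -> X) -> (D -> X) -> R) (eta : R) :
  (forall i, (0 < #|D i|)%N) ->
  (forall e, 0 < e -> exists2 e', 0 < e' & forall (D' : finType) (Z : set (D' -> X)),
     (0 < #|D'|)%N ->
     (sep_number Z (@d1 D') e <= sep_number Z (@d2 D') e' * (expR (eta * #|D'|%:R))%:E)%E) ->
  (sofic_entropy_with act rho le sigma d1 <= sofic_entropy_with act rho le sigma d2 + eta%:E)%E.
Proof.
move=> D_gt0 sep_le; apply: ge_ereal_sup => _ [e e_gt0 <-].
have [e' e'_gt0 sep_le_e'] := sep_le e e_gt0.
apply: le_trans (leeD2r _ (ereal_sup_ubound _)); last by exists e'.
apply: ereal_inf_image_leDr => F _; apply: ereal_inf_image_leDr => delta _.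
apply: net_limsup_leDr => i; have n_gt0 : 0 < (#|D i|%:R : R) by rewrite ltr0n.
have := scaled_elog_le n_gt0 (sep_number_ge0 _ _ _) (expR_gt0 _) (sep_le_e' _ _ (D_gt0 i)).
by rewrite expRK mulrC mulfK ?gt_eqF.
Qed.

Theorem proposition4p3 (R : realType) (M : Type) (mul : M -> M -> M) (one : M)
  (X : topologicalType) (act : M -> X -> X) (rho : X -> X -> R)
  (I : Type) (le : I -> I -> Prop) (D : I -> finType)
  (sigma : forall i, M -> D i -> D i) :
  is_monoid mul one ->
  compact [set: X] ->
  is_cont_action mul one act ->
  is_sofic_approx R mul one le sigma ->
  net_card_to_infty le D ->
  is_cont_pseudometric rho ->
  sofic_top_entropy act rho le sigma =
  sofic_entropy_with act rho le sigma (fun D' => @rho2 R X rho D').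
Proof.
move=> _ cpt _ [_ D_gt0 _ _ _] _ [rho_ge0 rho_refl rho_sym rho_tri rho_cont].
have rho_cont1 c : continuous (rho c).
  move=> y; apply: (@continuous_comp _ _ _ (pair c) (fun p : X * X => rho p.1 p.2)).
    by apply: cvg_pair; [exact: cvg_cst|exact: cvg_id].
  exact: rho_cont.
apply/eqP; rewrite eq_le; apply/andP; split.
- apply/lee_addgt0Pr => eta eta_gt0; apply: sofic_entropy_with_leDr => // e e_gt0.
  have [K [idx idx_small]] := compact_finite_partition rho_refl rho_sym rho_tri rho_cont1 cpt e_gt0.
  have [e' e'_gt0 sep_le] :=
    sep_number_rhoinf_le rho_ge0 rho_refl rho_sym rho_tri e_gt0 idx_small eta_gt0.
  by exists e'.
- rewrite -[leRHS]adde0; apply: sofic_entropy_with_leDr => // e e_gt0.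
  exists e => // D' Z D'_gt0; rewrite mul0r expR0 mule1.
  by apply: le_sep_number => phi psi _ _; exact: rho2_le_rhoinf.
Qed.
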